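(* Let $R\in\{\mathrm C,\mathrm S\}$, let $p,q\in[0,1]$ be rational numbers with $p<q$, let $I$ be a closed interval with $I\subseteq(0,1)$, and let $\varpi\in\Omega$ be wCH-random for $I$. Then a path $\omega\in\Omega$ is $R$-random for $\varphi^\varpi_{p,q}$ if and only if it is $R$-random for $[p,q]$.
   Context: Notation: $\mathbb N=\{1,2,\dots\}$, $\mathbb N_0=\mathbb N\cup\{0\}$. $\Omega=\{0,1\}^{\mathbb N}$ is the set of paths $\omega=(\omega_1,\omega_2,\dots)$; $\omega_{1:n}=(\omega_1,\dots,\omega_n)$, $\omega_{1:0}=\square$. $\mathbb S=\bigcup_{n\in\mathbb N_0}\{0,1\}^n$ is the set of situations, $|s|$ the length, $sx$ concatenation. For $r\in[0,1]$, $f:\{0,1\}\to\mathbb R$: $E_r(f)=rf(1)+(1-r)f(0)$; for a closed interval $I\subseteq[0,1]$, $\overline E_I(f)=\max_{r\in I}E_r(f)$. A forecasting system is a map $\varphi$ from $\mathbb S$ to closed subintervals of $[0,1]$, $\underline\varphi(s)=\min\varphi(s)$, $\overline\varphi(s)=\max\varphi(s)$; being random for an interval $I$ means being random for the constant forecasting system with value $I$. A real process is $F:\mathbb S\to\mathbb R$; $\Delta F(s)$ is $x\mapsto F(sx)-F(s)$. $M$ is a supermartingale for $\varphi$ if $\overline E_{\varphi(s)}(\Delta M(s))\le0$ for all $s$. A test supermartingale for $\varphi$ is a non-negative supermartingale $T$ for $\varphi$ with $T(\square)=1$. Computability: maps from countable effectively encoded domains to $\mathbb N_0$, $\mathbb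 Q$ or $\{0,1\}$ are recursive if Turing-computable; a real map $r$ is computable if $|r(d)-q(d,n)|<2^{-n}$ for a recursive rational $q$. $\overline{\mathbb T}_{\mathrm C}(\varphi)=\overline{\mathbb T}_{\mathrm S}(\varphi)$ is the set of positive, rational-valued, recursive test supermartingales for $\varphi$. $\omega$ is C-random for $\varphi$ if no $T\in\overline{\mathbb T}_{\mathrm C}(\varphi)$ has $\limsup_nT(\omega_{1:n})=\infty$. A real growth function is a computable, non-decreasing, unbounded $\tau:\mathbb N_0\to[0,\infty)$; $\omega$ is S-random for $\varphi$ if there are no $T\in\overline{\mathbb T}_{\mathrm S}(\varphi)$ and real growth function $\tau$ with $\limsup_n[T(\omega_{1:n})-\tau(n)]\ge0$. A selection process is $S:\mathbb S\to\{0,1\}$, temporal if $S(s)$ depends only on $|s|$ (written $S(n)$). A path $\varpi$ is wCH-random for $\varphi$ if for every recursive temporal selection process $S$ with $\lim_n\sum_{k=0}^{n-1}S(k)=\infty$: $\liminf_n\frac{\sum_{k=0}^{n-1}S(k)[\varpi_{k+1}-\underline\varphi(\varpi_{1:k})]}{\sum_{k=0}^{n-1}S(k)}\ge0$ and $\limsup_n\frac{\sum_{k=0}^{n-1}S(k)[\varpi_{k+1}-\overline\varphi(\varpi_{1:k})]}{\sum_{k=0}^{n-1}S(k)}\le0$. For $\varpi\in\Omega$, $\varphi^\varpi_{p,q}$ is the precise forecasting system with $\varphi^\varpi_{p,q}(s)=p$ if $\varpi_{|s|+1}=0$ and $\varphi^\varpi_{p,q}(s)=q$ if $\varpi_{|s|+1}=1$.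 *)

From Stdlib Require Import Reals Lra Lia List QArith.
Open Scope R_scope.

Inductive code : Type :=
| CZero : code
| CSucc : code
| CProj : nat -> code
| CComp : code -> list code -> code
| CPrimRec : code -> code -> code
| CMu : code -> code.

Inductive eval : code -> list nat -> nat -> Prop :=
| ev_zero : forall v, eval CZero v 0
| ev_succ : forall x v, eval CSucc (x :: v) (S x)
| ev_proj : forall i v, (i < length v)%nat -> eval (CProj i) v (nth i v 0%nat)
| ev_comp : forall f gs v ws y, evals gs v ws -> eval f ws y -> eval (CComp f gs) v y
| ev_prim0 : forall f g v y, eval f v y -> eval (CPrimRec f g) (0%nat :: v) y
| ev_primS : forall f g n v y z,
    eval (CPrimRec f g) (n :: v) y -> eval g (n :: y :: v) z ->
    eval (CPrimRec f g) (S n :: v) z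
| ev_mu : forall f v n,
    eval f (n :: v) 0 ->
    (forall m, (m < n)%nat -> exists k, eval f (m :: v) (S k)) ->
    eval (CMu f) v n
with evals : list code -> list nat -> list nat -> Prop :=
| evs_nil : forall v, evals nil v nil
| evs_cons : forall g gs v y ys, eval g v y -> evals gs v ys -> evals (g :: gs) v (y :: ys).

(* A situation is a finite binary string (true = 1, false = 0). *)
Definition sit := list bool.

(* effective encoding of situations into nat: leading 1 followed by the bits *)
Definition enc_sit (s : sit) : nat :=
  fold_left (fun acc (b : bool) => (2 * acc + (if b then 1 else 0))%nat) s 1%nat.

(* A path omega = (omega_1, omega_2, ...) is represented by w : nat -> bool
   with omega_k = w (k-1). *)
Definition path := nat -> bool.

Fixpoint prefix (w : path) (n : nat) : sit :=
  match n with
  | O => nil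
  | S n' => prefix w n' ++ (w n' :: nil)
  end.

Definition b2R (b : bool) : R := if b then 1 else 0.

Definition rec_rat_sit (f : sit -> R) : Prop :=
  exists ca cb cd : code, forall s : sit, exists a b d : nat,
    eval ca (enc_sit s :: nil) a /\ eval cb (enc_sit s :: nil) b /\
    eval cd (enc_sit s :: nil) d /\
    f s = (INR a - INR b) / INR (S d).

Definition computable_real_nat (tau : nat -> R) : Prop :=
  exists ca cb cd : code, forall n k : nat, exists a b d : nat,
    eval ca (n :: k :: nil) a /\ eval cb (n :: k :: nil) b /\
    eval cd (n :: k :: nil) d /\
    Rabs (tau n - (INR a - INR b) / INR (S d)) < / (2 ^ k).

Definition rec_temporal (Sel : nat -> bool) : Prop :=
  exists c : code, forall n : nat, eval c (n :: nil) (if Sel n then 1%nat else 0%nat).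

(* A closed interval [lo, hi] is represented by the pair (lo, hi). *)
Definition fsys := sit -> (R * R).

Definition lowf (phi : fsys) (s : sit) : R := fst (phi s).
Definition upf (phi : fsys) (s : sit) : R := snd (phi s).

Definition E (r : R) (f : bool -> R) : R := r * f true + (1 - r) * f false.

Definition Delta (F : sit -> R) (s : sit) : bool -> R :=
  fun x => F (s ++ (x :: nil)) - F s.

Definition supermartingale (phi : fsys) (M : sit -> R) : Prop :=
  forall s : sit, forall r : R, lowf phi s <= r <= upf phi s -> E r (Delta M s) <= 0.

(* overline{T}_C(phi) = overline{T}_S(phi): positive, rational-valued, recursive
   test supermartingales *)
Definition test_class (phi : fsys) (T : sit -> R) : Prop :=
  supermartingale phi T /\ T nil = 1 /\ (forall s, 0 < T s) /\ rec_rat_sit T.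

Definition growth_function (tau : nat -> R) : Prop :=
  computable_real_nat tau /\
  (forall n, 0 <= tau n) /\
  (forall n m, (n <= m)%nat -> tau n <= tau m) /\
  (forall B, exists n, B < tau n).

Definition C_random (phi : fsys) (w : path) : Prop :=
  ~ exists T, test_class phi T /\
      forall B : R, forall N : nat, exists n, (N <= n)%nat /\ B < T (prefix w n).

Definition S_random (phi : fsys) (w : path) : Prop :=
  ~ exists T tau, test_class phi T /\ growth_function tau /\
      forall eps : R, 0 < eps -> forall N : nat, exists n, (N <= n)%nat /\
        - eps < T (prefix w n) - tau n.

Inductive rkind := RC | RS.

Definition R_random (k : rkind) (phi : fsys) (w : path) : Prop :=
  match k with RC => C_random phi w | RS => S_random phi w end.

Fixpoint rsum (f : nat -> R) (n : nat) : R :=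
  match n with O => 0 | S n' => rsum f n' + f n' end.

Definition wCH_random (phi : fsys) (v : path) : Prop :=
  forall Sel : nat -> bool, rec_temporal Sel ->
    (forall B : R, exists N, forall n, (N <= n)%nat -> B < rsum (fun k => b2R (Sel k)) n) ->
    (forall eps : R, 0 < eps -> exists N, forall n, (N <= n)%nat ->
       - eps < rsum (fun k => b2R (Sel k) * (b2R (v k) - lowf phi (prefix v k))) n
               / rsum (fun k => b2R (Sel k)) n) /\
    (forall eps : R, 0 < eps -> exists N, forall n, (N <= n)%nat ->
       rsum (fun k => b2R (Sel k) * (b2R (v k) - upf phi (prefix v k))) n
               / rsum (fun k => b2R (Sel k)) n < eps).

Definition const_fs (a b : R) : fsys := fun _ => (a, b).

Definition phi_pq (v : path) (p q : R) : fsys :=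
  fun s => if v (length s) then (q, q) else (p, p).

(* A test for phi_pq can gain at a situation s against the forecast p only if
   varpi_{|s|+1} = 1, and against q only if varpi_{|s|+1} = 0.  As p, q are
   rational and the test is recursive and rational-valued, the set of depths at
   which some situation offers such a gain is decidable, hence a recursive
   temporal selection; were it infinite, varpi would have relative frequency 1
   (resp. 0) along it, contradicting wCH-randomness for an interval inside
   (0,1).  So beyond some depth the test is a supermartingale for p and for q,
   hence for all of [p,q].  Starting it at that depth, divided by a bound of its
   values there, gives a test for [p,q] that succeeds wherever the original one
   does.  The converse is immediate because phi_pq(s) is contained in [p,q]. *)

From Stdlib Require Import Reals Lra Lia List QArith Classical ClassicalEpsilon.
Import ListNotations.
Open Scope R_scope.

(** * Primitive recursive arithmetic *)

Lemma ev_proj_eq i v y : (i < length v)%nat -> y = nth i v 0%nat -> eval (CProj i) v y.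
Proof. intros Hi ->. now constructor. Qed.

Definition app1 (c e : code) : code := CComp c [e].
Definition app2 (c e1 e2 : code) : code := CComp c [e1; e2].

Lemma ev_app1 c e v x z : eval e v x -> eval c [x] z -> eval (app1 c e) v z.
Proof. intros. econstructor; [|eassumption]. repeat constructor; auto. Qed.

Lemma ev_app2 c e1 e2 v x y z :
  eval e1 v x -> eval e2 v y -> eval c [x; y] z -> eval (app2 c e1 e2) v z.
Proof. intros. econstructor; [|eassumption]. repeat constructor; auto. Qed.

Ltac ev_proj := eapply ev_proj_eq; [cbn; lia | reflexivity].

Fixpoint cnat (c : nat) : code :=
  match c with O => CZero | S c => app1 CSucc (cnat c) end.

Lemma ev_cnat c v : eval (cnat c) v c.
Proof. induction c; cbn; [constructor | eapply ev_app1; [exact IHc | constructor]]. Qed.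

Definition plus_code : code := CPrimRec (CProj 0) (app1 CSucc (CProj 1)).
Definition mult_code : code := CPrimRec CZero (app2 plus_code (CProj 1) (CProj 2)).
Definition pred_code : code := CPrimRec CZero (CProj 0).
Definition monus_code : code := CPrimRec (CProj 0) (app1 pred_code (CProj 1)).
Definition sg_code : code := CPrimRec CZero (cnat 1).
Definition pow2_code : code := CPrimRec (cnat 1) (app2 plus_code (CProj 1) (CProj 1)).

Lemma ev_plus_code n x : eval plus_code [n; x] (n + x).
Proof.
  induction n.
  - apply ev_prim0. ev_proj.
  - eapply ev_primS; [exact IHn|]. eapply ev_app1; [ev_proj | constructor].
Qed.

Lemma ev_mult_code n x : eval mult_code [n; x] (n * x).
Proof.
  induction n.
  - apply ev_prim0. constructor.
  - eapply ev_primS; [exact IHn|]. eapply ev_app2; [ev_proj | ev_proj |].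
    cbn. rewrite Nat.add_comm. apply ev_plus_code.
Qed.

Lemma ev_pred_code n : eval pred_code [n] (Nat.pred n).
Proof.
  induction n.
  - apply ev_prim0. constructor.
  - eapply ev_primS; [exact IHn | ev_proj].
Qed.

Lemma ev_monus_code n x : eval monus_code [n; x] (x - n).
Proof.
  induction n.
  - apply ev_prim0. eapply ev_proj_eq; cbn; [lia | now rewrite Nat.sub_0_r].
  - eapply ev_primS; [exact IHn|]. eapply ev_app1; [ev_proj|].
    replace (x - S n)%nat with (Nat.pred (x - n)) by lia. apply ev_pred_code.
Qed.

Lemma ev_sg_code n : eval sg_code [n] (Nat.min n 1).
Proof.
  induction n.
  - apply ev_prim0. constructor.
  - eapply ev_primS; [exact IHn|]. replace (Nat.min (S n) 1) with 1%nat by lia. apply ev_cnat.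
Qed.

Lemma ev_pow2_code n : eval pow2_code [n] (2 ^ n).
Proof.
  induction n.
  - apply ev_prim0. apply ev_cnat.
  - eapply ev_primS; [exact IHn|]. eapply ev_app2; [ev_proj | ev_proj |].
    cbn. rewrite Nat.add_0_r. apply ev_plus_code.
Qed.

Definition cplus (e1 e2 : code) : code := app2 plus_code e1 e2.
Definition cmult (e1 e2 : code) : code := app2 mult_code e1 e2.
Definition cmonus (e1 e2 : code) : code := app2 monus_code e2 e1.
Definition csg (e : code) : code := app1 sg_code e.
Definition cpow2 (e : code) : code := app1 pow2_code e.
Definition csucc (e : code) : code := app1 CSucc e.

Lemma ev_cplus e1 e2 v x y z : eval e1 v x -> eval e2 v y -> z = (x + y)%nat ->
  eval (cplus e1 e2) v z.
Proof. intros H1 H2 ->. eapply ev_app2; eauto using ev_plus_code. Qed.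

Lemma ev_cmult e1 e2 v x y z : eval e1 v x -> eval e2 v y -> z = (x * y)%nat ->
  eval (cmult e1 e2) v z.
Proof. intros H1 H2 ->. eapply ev_app2; eauto using ev_mult_code. Qed.

Lemma ev_cmonus e1 e2 v x y z : eval e1 v x -> eval e2 v y -> z = (x - y)%nat ->
  eval (cmonus e1 e2) v z.
Proof. intros H1 H2 ->. eapply ev_app2; eauto using ev_monus_code. Qed.

Lemma ev_csg e v x z : eval e v x -> z = Nat.min x 1 -> eval (csg e) v z.
Proof. intros H ->. eapply ev_app1; eauto using ev_sg_code. Qed.

Lemma ev_cpow2 e v x z : eval e v x -> z = (2 ^ x)%nat -> eval (cpow2 e) v z.
Proof. intros H ->. eapply ev_app1; eauto using ev_pow2_code. Qed.

Lemma ev_csucc e v x z : eval e v x -> z = S x -> eval (csucc e) v z.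
Proof. intros H ->. eapply ev_app1; [exact H | constructor]. Qed.

Ltac ev_expr :=
  repeat first
    [ apply ev_cnat | eapply ev_cplus | eapply ev_cmult | eapply ev_cmonus | eapply ev_csg
    | eapply ev_cpow2 | eapply ev_csucc | ev_proj | eassumption | reflexivity ].

Definition bsum_code (c : code) : code :=
  CPrimRec CZero (cplus (CProj 1) (app2 c (CProj 0) (CProj 2))).

Lemma ev_bsum_code c p (Q : nat -> Prop) :
  (forall i, exists z, eval c [i; p] z /\ ((0 < z)%nat <-> Q i)) ->
  forall n, exists y, eval (bsum_code c) [n; p] y /\
    ((0 < y)%nat <-> exists i, (i < n)%nat /\ Q i).
Proof.
  intros Hc n. induction n as [|n (y & Hy & Hiff)].
  - exists 0%nat. split; [apply ev_prim0; constructor|].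
    split; [lia | intros (i & Hi & _); lia].
  - destruct (Hc n) as (z & Hz & Hziff). exists (y + z)%nat. split.
    + eapply ev_primS; [exact Hy|]. eapply ev_cplus; [ev_proj | | reflexivity].
      eapply ev_app2; [ev_proj | ev_proj | exact Hz].
    + split.
      * intros Hpos. destruct (Nat.eq_dec z 0) as [->|Hz0].
        -- destruct (proj1 Hiff ltac:(lia)) as (i & Hi & HQ). exists i. split; [lia | exact HQ].
        -- exists n. split; [lia | apply Hziff; lia].
      * intros (i & Hi & HQ). destruct (Nat.eq_dec i n) as [->|Hin].
        -- apply Hziff in HQ. lia.
        -- assert (0 < y)%nat by (apply Hiff; exists i; split; [lia | exact HQ]). lia.
Qed.

(** * Encoding of situations *)

Lemma enc_sit_snoc s x : enc_sit (s ++ [x]) = (2 * enc_sit s + Nat.b2n x)%nat.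
Proof. unfold enc_sit. rewrite fold_left_app. now destruct x. Qed.

Lemma enc_sit_range s : (2 ^ length s <= enc_sit s < 2 ^ S (length s))%nat.
Proof.
  induction s as [|x s IH] using rev_ind; [cbn; lia|].
  rewrite enc_sit_snoc, length_app, Nat.add_1_r. cbn [Nat.pow] in *. destruct x; cbn; lia.
Qed.

Lemma enc_sit_lt_pow2 s N : (enc_sit s < 2 ^ N)%nat <-> (length s < N)%nat.
Proof.
  pose proof (enc_sit_range s) as Hs. split; intros Hlt.
  - destruct (Nat.lt_ge_cases (length s) N) as [|Hge]; [assumption|].
    pose proof (Nat.pow_le_mono_r 2 N (length s) ltac:(lia) Hge). lia.
  - pose proof (Nat.pow_le_mono_r 2 (S (length s)) N ltac:(lia) Hlt). lia.
Qed.

Lemma enc_sit_length s n : (2 ^ n <= enc_sit s < 2 ^ S n)%nat -> length s = n.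
Proof.
  intros [Hlo Hhi]. apply enc_sit_lt_pow2 in Hhi.
  assert (~ (length s < n)%nat) by (rewrite <- enc_sit_lt_pow2; lia). lia.
Qed.

Lemma enc_sit_inj s s' : enc_sit s = enc_sit s' -> s = s'.
Proof.
  intros H. assert (Hl : length s = length s').
  { apply enc_sit_length. rewrite H. apply enc_sit_range. }
  revert s' H Hl. induction s as [|x s IH] using rev_ind;
    intros s' H Hl; destruct s' as [|x' s' _] using rev_ind; auto;
    rewrite ?length_app in Hl; cbn in Hl; try lia.
  rewrite !enc_sit_snoc in H.
  assert (x = x') as <- by (destruct x, x'; cbn in H; auto; lia).
  f_equal. apply IH; lia.
Qed.

Lemma enc_sit_surj x : (1 <= x)%nat -> exists s, enc_sit s = x.
Proof.
  induction x as [x IH] using (well_founded_induction Wf_nat.lt_wf). intros Hx.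
  destruct (Nat.eq_dec x 1) as [->|Hx1]; [now exists nil|].
  pose proof (Nat.div2_odd x) as Hx2.
  destruct (IH (Nat.div2 x)) as (s & Hs); [destruct (Nat.odd x); cbn in Hx2; lia ..|].
  exists (s ++ [Nat.odd x]). rewrite enc_sit_snoc, Hs. destruct (Nat.odd x); cbn in *; lia.
Qed.

Lemma prefix_length w n : length (prefix w n) = n.
Proof. induction n; cbn; [|rewrite length_app, IHn; cbn]; lia. Qed.

(** * Recursive rational-valued processes *)

Definition rat_value (ca cb cd : code) (v : list nat) (x : R) : Prop :=
  exists a b d : nat, eval ca v a /\ eval cb v b /\ eval cd v d /\
    x = (INR a - INR b) / INR (S d).

Lemma rat_value_one v : rat_value (cnat 1) CZero CZero v 1.
Proof.
  exists 1%nat, 0%nat, 0%nat. repeat split; try apply ev_cnat; try constructor. cbn. field.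
Qed.

Lemma rat_value_opp ca cb cd v x :
  rat_value ca cb cd v x -> rat_value cb ca cd v (- x).
Proof.
  intros (a & b & d & Ha & Hb & Hd & ->). exists b, a, d. repeat split; auto.
  assert (0 < INR (S d)) by (apply lt_0_INR; lia). field. lra.
Qed.

Lemma rat_value_plus ca cb cd ca' cb' cd' v x y :
  rat_value ca cb cd v x -> rat_value ca' cb' cd' v y ->
  rat_value (cplus (cmult ca (csucc cd')) (cmult ca' (csucc cd)))
            (cplus (cmult cb (csucc cd')) (cmult cb' (csucc cd)))
            (cplus (cplus (cmult cd cd') cd) cd') v (x + y).
Proof.
  intros (a & b & d & Ha & Hb & Hd & ->) (a' & b' & d' & Ha' & Hb' & Hd' & ->).
  do 3 eexists. split; [|split; [|split]]; [ev_expr .. |].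
  replace (S (d * d' + d + d')) with (S d * S d')%nat by lia.
  rewrite !plus_INR, !mult_INR.
  assert (0 < INR (S d)) by (apply lt_0_INR; lia).
  assert (0 < INR (S d')) by (apply lt_0_INR; lia).
  field. lra.
Qed.

Lemma rat_value_mult_nat m ca cb cd v x :
  rat_value ca cb cd v x -> rat_value (cmult (cnat m) ca) (cmult (cnat m) cb) cd v (INR m * x).
Proof.
  intros (a & b & d & Ha & Hb & Hd & ->).
  do 3 eexists. split; [|split; [|split]]; [ev_expr .. |].
  rewrite !mult_INR. unfold Rdiv. ring.
Qed.

Lemma rat_value_div_nat n ca cb cd v x :
  rat_value ca cb cd v x ->
  rat_value ca cb (cplus (cmult cd (cnat (S n))) (cnat n)) v (x / INR (S n)).
Proof.
  intros (a & b & d & Ha & Hb & Hd & ->).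
  do 3 eexists. split; [|split; [|split]]; [ev_expr .. |].
  replace (S (d * S n + n)) with (S d * S n)%nat by lia.
  rewrite mult_INR.
  assert (0 < INR (S d)) by (apply lt_0_INR; lia).
  assert (0 < INR (S n)) by (apply lt_0_INR; lia).
  field. lra.
Qed.

Lemma rat_value_comp e ca cb cd v u x :
  eval e v u -> rat_value ca cb cd [u] x ->
  rat_value (app1 ca e) (app1 cb e) (app1 cd e) v x.
Proof.
  intros He (a & b & d & Ha & Hb & Hd & ->).
  exists a, b, d. repeat split; eauto using ev_app1.
Qed.

Definition cif (cc e1 e2 : code) : code :=
  cplus (cmult (csg cc) e1) (cmult (cmonus (cnat 1) (csg cc)) e2).

Lemma ev_cif cc e1 e2 v z x y :
  eval cc v z -> eval e1 v x -> eval e2 v y ->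
  eval (cif cc e1 e2) v (if Nat.ltb 0 z then x else y).
Proof. intros. unfold cif. ev_expr. destruct (Nat.ltb_spec 0 z); lia. Qed.

Lemma rat_value_if cc ca cb cd ca' cb' cd' v z x y :
  eval cc v z -> rat_value ca cb cd v x -> rat_value ca' cb' cd' v y ->
  rat_value (cif cc ca ca') (cif cc cb cb') (cif cc cd cd') v (if Nat.ltb 0 z then x else y).
Proof.
  intros Hc (a & b & d & Ha & Hb & Hd & ->) (a' & b' & d' & Ha' & Hb' & Hd' & ->).
  exists (if Nat.ltb 0 z then a else a'), (if Nat.ltb 0 z then b else b'),
    (if Nat.ltb 0 z then d else d').
  repeat split; try (apply ev_cif; assumption). now destruct (Nat.ltb 0 z).
Qed.

Lemma rat_value_pos ca cb cd v x :
  rat_value ca cb cd v x -> exists z, eval (cmonus ca cb) v z /\ ((0 < z)%nat <-> 0 < x).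
Proof.
  intros (a & b & d & Ha & Hb & Hd & ->). exists (a - b)%nat. split; [ev_expr|].
  assert (0 < INR (S d)) by (apply lt_0_INR; lia).
  split; intros Hpos.
  - apply Rdiv_lt_0_compat; [|assumption]. apply Rlt_0_minus, lt_INR. lia.
  - assert (Hab : INR b < INR a).
    { apply Rlt_0_minus. replace (INR a - INR b) with ((INR a - INR b) / INR (S d) * INR (S d))
        by (field; lra). now apply Rmult_lt_0_compat. }
    apply INR_lt in Hab. lia.
Qed.

Lemma rec_rat_sit_ext f g : (forall s, f s = g s) -> rec_rat_sit f -> rec_rat_sit g.
Proof.
  intros Hfg (ca & cb & cd & Hf). exists ca, cb, cd. intros s. rewrite <- Hfg. apply Hf.
Qed.

Lemma rec_rat_sit_one : rec_rat_sit (fun _ => 1).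
Proof. exists (cnat 1), CZero, CZero. intros s. apply rat_value_one. Qed.

Lemma rec_rat_sit_opp f : rec_rat_sit f -> rec_rat_sit (fun s => - f s).
Proof.
  intros (ca & cb & cd & Hf). exists cb, ca, cd. intros s. exact (rat_value_opp _ _ _ _ _ (Hf s)).
Qed.

Lemma rec_rat_sit_plus f g :
  rec_rat_sit f -> rec_rat_sit g -> rec_rat_sit (fun s => f s + g s).
Proof.
  intros (ca & cb & cd & Hf) (ca' & cb' & cd' & Hg).
  do 3 eexists. intros s. exact (rat_value_plus _ _ _ _ _ _ _ _ _ (Hf s) (Hg s)).
Qed.

Lemma rec_rat_sit_mult_nat m f : rec_rat_sit f -> rec_rat_sit (fun s => INR m * f s).
Proof.
  intros (ca & cb & cd & Hf). do 3 eexists. intros s.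
  exact (rat_value_mult_nat m _ _ _ _ _ (Hf s)).
Qed.

Lemma rec_rat_sit_div_nat n f : rec_rat_sit f -> rec_rat_sit (fun s => f s / INR (S n)).
Proof.
  intros (ca & cb & cd & Hf). do 3 eexists. intros s.
  exact (rat_value_div_nat n _ _ _ _ _ (Hf s)).
Qed.

Lemma rec_rat_sit_snoc x f : rec_rat_sit f -> rec_rat_sit (fun s => f (s ++ [x])).
Proof.
  intros (ca & cb & cd & Hf).
  set (e := cplus (cmult (cnat 2) (CProj 0)) (cnat (Nat.b2n x))).
  exists (app1 ca e), (app1 cb e), (app1 cd e). intros s.
  apply (rat_value_comp e _ _ _ _ (enc_sit (s ++ [x]))).
  - rewrite enc_sit_snoc. unfold e. ev_expr.
  - apply Hf.
Qed.

Lemma IZR_as_nat_diff z : IZR z = INR (Z.to_nat z) - INR (Z.to_nat (- z)).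
Proof.
  destruct z as [|k|k]; cbn -[INR]; rewrite ?INR_0; [lra| |];
    rewrite INR_IZR_INZ, Znat.positive_nat_Z; [|rewrite IZR_NEG]; lra.
Qed.

Lemma rec_rat_sit_scale (x : Q) f : rec_rat_sit f -> rec_rat_sit (fun s => Q2R x * f s).
Proof.
  intros Hf.
  set (n := Z.to_nat (Qnum x)). set (m := Z.to_nat (- Qnum x)).
  set (k := Nat.pred (Pos.to_nat (Qden x))).
  apply (rec_rat_sit_ext (fun s => (INR n * f s + - (INR m * f s)) / INR (S k))).
  - intros s. unfold Q2R. rewrite IZR_as_nat_diff.
    assert (Hk : INR (S k) = IZR (Z.pos (Qden x))).
    { rewrite INR_IZR_INZ. f_equal. unfold k. lia. }
    rewrite Hk. assert (0 < IZR (Z.pos (Qden x))) by (apply IZR_lt; lia).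
    fold n m. field. lra.
  - apply rec_rat_sit_div_nat, rec_rat_sit_plus;
      [|apply rec_rat_sit_opp]; now apply rec_rat_sit_mult_nat.
Qed.

Lemma rec_rat_sit_E_Delta (r : Q) T :
  rec_rat_sit T -> rec_rat_sit (fun s => E (Q2R r) (Delta T s)).
Proof.
  intros HT.
  apply (rec_rat_sit_ext (fun s => Q2R r * T (s ++ [true]) +
           (T (s ++ [false]) + - (Q2R r * T (s ++ [false]) + T s)))).
  - intros s. unfold E, Delta. ring.
  - repeat first [ apply rec_rat_sit_plus | apply rec_rat_sit_opp | apply rec_rat_sit_scale
                 | apply rec_rat_sit_snoc | assumption ].
Qed.

Lemma rec_rat_sit_by_length N f g : rec_rat_sit f -> rec_rat_sit g ->
  rec_rat_sit (fun s => if Nat.ltb (length s) N then f s else g s).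
Proof.
  intros (ca & cb & cd & Hf) (ca' & cb' & cd' & Hg).
  set (cc := cmonus (cnat (2 ^ N)) (CProj 0)).
  exists (cif cc ca ca'), (cif cc cb cb'), (cif cc cd cd'). intros s.
  replace (Nat.ltb (length s) N) with (Nat.ltb 0 (2 ^ N - enc_sit s)).
  - apply rat_value_if; [unfold cc; ev_expr | apply Hf | apply Hg].
  - apply Bool.eq_iff_eq_true. rewrite !Nat.ltb_lt, <- enc_sit_lt_pow2. lia.
Qed.

Definition rec_pred_sit (P : sit -> Prop) : Prop :=
  exists c, forall s, exists z, eval c [enc_sit s] z /\ ((0 < z)%nat <-> P s).

Lemma rec_pred_sit_pos f : rec_rat_sit f -> rec_pred_sit (fun s => 0 < f s).
Proof.
  intros (ca & cb & cd & Hf). exists (cmonus ca cb). intros s.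
  exact (rat_value_pos _ _ _ _ _ (Hf s)).
Qed.

(* Situations of length [n] are encoded by [2^n + i], [i < 2^n]; summing the
   decision procedure over these codes decides the bounded existential. *)
Lemma rec_temporal_exists_length P : rec_pred_sit P ->
  exists Sel, rec_temporal Sel /\ forall n, Sel n = true <-> exists s, length s = n /\ P s.
Proof.
  intros (c & Hc).
  set (Q n := exists s, length s = n /\ P s).
  exists (fun n => if excluded_middle_informative (Q n) then true else false). split.
  2: { intros n. destruct (excluded_middle_informative (Q n)); split; easy. }
  set (inner := app1 c (cplus (CProj 0) (cpow2 (CProj 1)))).
  exists (csg (app2 (bsum_code inner) (cpow2 (CProj 0)) (CProj 0))). intros n.
  assert (Hinner : forall i, exists z, eval inner [i; n] z /\
            ((0 < z)%nat <-> exists s, enc_sit s = (i + 2 ^ n)%nat /\ P s)).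
  { intros i. destruct (enc_sit_surj (i + 2 ^ n)) as (s & Hs).
    { pose proof (Nat.pow_nonzero 2 n ltac:(lia)). lia. }
    destruct (Hc s) as (z & Hz & Hziff). exists z. split.
    - eapply ev_app1; [|exact Hz]. unfold inner. rewrite Hs. ev_expr.
    - rewrite Hziff. split; [now exists s|].
      intros (s' & Hs' & HP). rewrite <- Hs in Hs'. now apply enc_sit_inj in Hs' as <-. }
  destruct (ev_bsum_code _ _ _ Hinner (2 ^ n)) as (y & Hy & Hyiff).
  eapply ev_csg; [eapply ev_app2; [ev_expr | ev_proj | exact Hy]|].
  destruct (excluded_middle_informative (Q n)) as [(s & Hl & HP)|HnQ].
  - assert (0 < y)%nat; [|cbn; lia].
    apply Hyiff. pose proof (enc_sit_range s). rewrite Hl in *. cbn [Nat.pow] in *.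
    exists (enc_sit s - 2 ^ n)%nat. split; [lia|]. exists s. split; [lia | exact HP].
  - assert (y = 0)%nat; [|cbn; lia].
    destruct (Nat.eq_dec y 0) as [|Hy0]; [assumption|]. exfalso. apply HnQ.
    destruct (proj1 Hyiff ltac:(lia)) as (i & Hi & s & Hs & HP). exists s. split; [|exact HP].
    apply enc_sit_length. rewrite Hs. cbn [Nat.pow]. lia.
Qed.

(** * Recursive selections along a wCH-random path *)

Lemma rsum_le_nonneg f n m : (forall k, 0 <= f k) -> (n <= m)%nat -> rsum f n <= rsum f m.
Proof. intros Hf Hnm. induction Hnm; cbn; [lra|]. specialize (Hf m). lra. Qed.

Lemma b2R_nonneg x : 0 <= b2R x.
Proof. destruct x; cbn; lra. Qed.

Lemma rsum_selected_unbounded (Sel : nat -> bool) :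
  (forall N, exists n, (N <= n)%nat /\ Sel n = true) ->
  forall B, exists N, forall n, (N <= n)%nat -> B < rsum (fun k => b2R (Sel k)) n.
Proof.
  intros Hinf.
  assert (Hcount : forall j, exists N, INR j <= rsum (fun k => b2R (Sel k)) N).
  { induction j as [|j (N & HN)]; [exists 0%nat; cbn; lra|].
    destruct (Hinf N) as (n & Hn & Hs). exists (S n). rewrite S_INR. cbn. rewrite Hs.
    pose proof (rsum_le_nonneg _ _ _ (fun k => b2R_nonneg (Sel k)) Hn). cbn. lra. }
  intros B. destruct (INR_archimed 1 B ltac:(lra)) as (j & Hj).
  destruct (Hcount j) as (N & HN). exists N. intros n Hn.
  pose proof (rsum_le_nonneg _ _ _ (fun k => b2R_nonneg (Sel k)) Hn). lra.
Qed.

Lemma rsum_selected_const (Sel v : nat -> bool) c side :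
  (forall n, Sel n = true -> v n = side) ->
  forall n, rsum (fun k => b2R (Sel k) * (b2R (v k) - c)) n =
            (b2R side - c) * rsum (fun k => b2R (Sel k)) n.
Proof.
  intros Hv n. induction n as [|n IH]; cbn; [ring|]. rewrite IH.
  destruct (Sel n) eqn:Hs; [rewrite (Hv n Hs)|]; cbn; ring.
Qed.

Lemma wCH_selection_not_constant a b v Sel side :
  wCH_random (const_fs a b) v -> 0 < a -> b < 1 -> rec_temporal Sel ->
  (forall N, exists n, (N <= n)%nat /\ Sel n = true) ->
  ~ (forall n, Sel n = true -> v n = side).
Proof.
  intros Hw Ha Hb Hrec Hinf Hv.
  pose proof (rsum_selected_unbounded Sel Hinf) as Hunb.
  destruct (Hw Sel Hrec Hunb) as (Hlow & Hup).
  destruct (Hunb 0) as (N0 & HN0).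
  cbn [lowf upf const_fs fst snd] in Hlow, Hup.
  destruct side.
  - destruct (Hup (1 - b) ltac:(lra)) as (N & HN).
    specialize (HN (Nat.max N N0) ltac:(lia)). specialize (HN0 (Nat.max N N0) ltac:(lia)).
    rewrite rsum_selected_const with (side := true) in HN by assumption.
    unfold Rdiv in HN. rewrite Rmult_assoc, Rinv_r in HN; cbn in HN; lra.
  - destruct (Hlow a Ha) as (N & HN).
    specialize (HN (Nat.max N N0) ltac:(lia)). specialize (HN0 (Nat.max N N0) ltac:(lia)).
    rewrite rsum_selected_const with (side := false) in HN by assumption.
    unfold Rdiv in HN. rewrite Rmult_assoc, Rinv_r in HN; cbn in HN; lra.
Qed.

Lemma wCH_forcing_pred_finite a b v P side :
  wCH_random (const_fs a b) v -> 0 < a -> b < 1 -> rec_pred_sit P ->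
  (forall s, P s -> v (length s) = side) ->
  exists N, forall s, (N <= length s)%nat -> ~ P s.
Proof.
  intros Hw Ha Hb HP Hside.
  destruct (rec_temporal_exists_length P HP) as (Sel & Hrec & HSel).
  apply NNPP. intros Hnot. apply (wCH_selection_not_constant a b v Sel side Hw Ha Hb Hrec).
  - intros N. apply NNPP. intros Hfin. apply Hnot. exists N. intros s Hs HPs.
    apply Hfin. exists (length s). split; [exact Hs|]. apply HSel. now exists s.
  - intros n Hn. apply HSel in Hn as (s & <- & HPs). now apply Hside.
Qed.

(** * From tests for phi_pq to tests for [p, q] *)

Lemma E_between p q r f : p <= r <= q -> E p f <= 0 -> E q f <= 0 -> E r f <= 0.
Proof.
  intros Hr Hp Hq. destruct (Req_dec p q) as [<-|Hpq]; [now replace r with p by lra|].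
  assert (Hid : (q - p) * E r f = (q - r) * E p f + (r - p) * E q f) by (unfold E; ring).
  assert (0 < q - p) by lra. nra.
Qed.

Lemma test_class_phi_pq_of_const p q varpi T : p <= q ->
  test_class (const_fs p q) T -> test_class (phi_pq varpi p q) T.
Proof.
  intros Hpq (Hsm & HT). split; [|exact HT].
  intros s r Hr. apply Hsm. unfold lowf, upf, phi_pq, const_fs in *.
  destruct (varpi (length s)); cbn in *; lra.
Qed.

Lemma phi_pq_eventually_const a b varpi (p q : Q) T :
  wCH_random (const_fs a b) varpi -> 0 < a -> b < 1 ->
  test_class (phi_pq varpi (Q2R p) (Q2R q)) T ->
  exists N, forall s, (N <= length s)%nat ->
    forall r, Q2R p <= r <= Q2R q -> E r (Delta T s) <= 0.
Proof.
  intros Hw Ha Hb (Hsm & _ & _ & Hrec).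
  destruct (wCH_forcing_pred_finite a b varpi (fun s => 0 < E (Q2R p) (Delta T s)) true Hw Ha Hb)
    as (Np & HNp).
  { now apply rec_pred_sit_pos, rec_rat_sit_E_Delta. }
  { intros s HE. destruct (varpi (length s)) eqn:Hv; [reflexivity|].
    enough (E (Q2R p) (Delta T s) <= 0) by lra.
    apply Hsm. unfold lowf, upf, phi_pq. rewrite Hv. cbn. lra. }
  destruct (wCH_forcing_pred_finite a b varpi (fun s => 0 < E (Q2R q) (Delta T s)) false Hw Ha Hb)
    as (Nq & HNq).
  { now apply rec_pred_sit_pos, rec_rat_sit_E_Delta. }
  { intros s HE. destruct (varpi (length s)) eqn:Hv; [|reflexivity].
    enough (E (Q2R q) (Delta T s) <= 0) by lra.
    apply Hsm. unfold lowf, upf, phi_pq. rewrite Hv. cbn. lra. }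
  exists (Nat.max Np Nq). intros s Hs r Hr. apply (E_between (Q2R p) (Q2R q)); [exact Hr | |];
    apply Rnot_lt_le; [apply HNp | apply HNq]; lia.
Qed.

(* Dividing by a bound [S K] of [T] at depth [N] makes the step from the
   constant 1 into depth [N] a losing bet for every forecast in [0,1]. *)
Definition rescale_tail (T : sit -> R) (N K : nat) (s : sit) : R :=
  if Nat.ltb (length s) N then 1 else T s / INR (S K).

Lemma supermartingale_rescale_tail phi T N K :
  (forall s, 0 <= lowf phi s /\ upf phi s <= 1) ->
  (forall s, (N <= length s)%nat ->
     forall r, lowf phi s <= r <= upf phi s -> E r (Delta T s) <= 0) ->
  (forall s, length s = N -> T s <= INR (S K)) ->
  supermartingale phi (rescale_tail T N K).
Proof.
  intros Hphi Hev Hbound s r Hr. specialize (Hphi s).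
  assert (HK : 0 < INR (S K)) by (apply lt_0_INR; lia).
  unfold E, Delta, rescale_tail. rewrite !length_app. cbn [length].
  destruct (Nat.ltb_spec (length s) N), (Nat.ltb_spec (length s + 1) N); try lia; [lra| |].
  - assert (Hx : forall x, T (s ++ [x]) / INR (S K) <= 1).
    { intros x. apply Rmult_le_reg_r with (INR (S K)); [exact HK|].
      unfold Rdiv. rewrite Rmult_assoc, Rinv_l, Rmult_1_r, Rmult_1_l by lra.
      apply Hbound. rewrite length_app. cbn. lia. }
    pose proof (Hx true). pose proof (Hx false). nra.
  - specialize (Hev s ltac:(lia) r Hr). unfold E, Delta in Hev.
    replace (r * (T (s ++ [true]) / INR (S K) - T s / INR (S K)) +
             (1 - r) * (T (s ++ [false]) / INR (S K) - T s / INR (S K)))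
      with ((r * (T (s ++ [true]) - T s) + (1 - r) * (T (s ++ [false]) - T s)) / INR (S K))
      by (field; lra).
    pose proof (Rinv_0_lt_compat _ HK). unfold Rdiv. nra.
Qed.

Lemma rec_rat_sit_rescale_tail T N K : rec_rat_sit T -> rec_rat_sit (rescale_tail T N K).
Proof.
  intros HT. apply rec_rat_sit_by_length; [apply rec_rat_sit_one | now apply rec_rat_sit_div_nat].
Qed.

Lemma rescale_tail_pos T N K : (forall s, 0 < T s) -> forall s, 0 < rescale_tail T N K s.
Proof.
  intros HT s. unfold rescale_tail. destruct (Nat.ltb (length s) N); [lra|].
  apply Rdiv_lt_0_compat; [apply HT | apply lt_0_INR; lia].
Qed.

Lemma level_bounded n (f : sit -> R) : exists K, forall s, length s = n -> f s <= INR (S K).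
Proof.
  revert f. induction n as [|n IH]; intros f.
  - destruct (INR_archimed 1 (f nil) ltac:(lra)) as (K & HK).
    exists K. intros [|] Hs; [rewrite S_INR; lra | discriminate].
  - destruct (IH (fun s => f (true :: s))) as (K1 & H1).
    destruct (IH (fun s => f (false :: s))) as (K0 & H0).
    exists (Nat.max K1 K0). intros [|[] s] Hs; cbn in Hs; try discriminate; injection Hs as Hs.
    + apply Rle_trans with (INR (S K1)); [now apply H1 | apply le_INR; lia].
    + apply Rle_trans with (INR (S K0)); [now apply H0 | apply le_INR; lia].
Qed.

Lemma test_class_const_of_phi_pq a b varpi (p q : Q) T :
  wCH_random (const_fs a b) varpi -> 0 < a -> b < 1 ->
  0 <= Q2R p -> Q2R q <= 1 ->
  test_class (phi_pq varpi (Q2R p) (Q2R q)) T ->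
  exists N K, test_class (const_fs (Q2R p) (Q2R q)) (rescale_tail T N K).
Proof.
  intros Hw Ha Hb Hp Hq HT.
  destruct (phi_pq_eventually_const a b varpi p q T Hw Ha Hb HT) as (N & HN).
  destruct (level_bounded (S N) T) as (K & HK).
  destruct HT as (_ & _ & Hpos & Hrec).
  exists (S N), K. split; [|split; [|split]].
  - apply supermartingale_rescale_tail; [intros s; cbn; lra | | exact HK].
    intros s Hs. apply HN. lia.
  - reflexivity.
  - now apply rescale_tail_pos.
  - now apply rec_rat_sit_rescale_tail.
Qed.

Lemma INR_S_ge_1 K : 1 <= INR (S K).
Proof. rewrite S_INR. pose proof (pos_INR K). lra. Qed.

Lemma lt_div_INR_S B x K : B * INR (S K) < x -> B < x / INR (S K).
Proof.
  intros H. pose proof (INR_S_ge_1 K).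
  apply Rmult_lt_reg_r with (INR (S K)); [lra|].
  unfold Rdiv. rewrite Rmult_assoc, Rinv_l, Rmult_1_r by lra. exact H.
Qed.

Lemma div_INR_S_ge_min x K : Rmin x 0 <= x / INR (S K).
Proof.
  pose proof (INR_S_ge_1 K). pose proof (Rinv_0_lt_compat _ (Rlt_le_trans 0 1 _ Rlt_0_1 H)).
  pose proof (Rinv_le_contravar 1 (INR (S K)) Rlt_0_1 H). rewrite Rinv_1 in *.
  unfold Rmin, Rdiv. destruct (Rle_dec x 0); nra.
Qed.

Lemma Rabs_div_INR_S_le x K : Rabs (x / INR (S K)) <= Rabs x.
Proof.
  pose proof (INR_S_ge_1 K). pose proof (Rinv_le_contravar 1 (INR (S K)) Rlt_0_1 H).
  rewrite Rinv_1 in *. unfold Rdiv. rewrite Rabs_mult, Rabs_inv, (Rabs_pos_eq (INR (S K))) by lra.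
  pose proof (Rabs_pos x). pose proof (Rinv_0_lt_compat (INR (S K)) ltac:(lra)). nra.
Qed.

Lemma computable_real_nat_div_nat tau K :
  computable_real_nat tau -> computable_real_nat (fun n => tau n / INR (S K)).
Proof.
  intros (ca & cb & cd & Htau). exists ca, cb, (cplus (cmult cd (cnat (S K))) (cnat K)).
  intros n k.
  destruct (Htau n k) as (a & b & d & Ha & Hb & Hd & Hk).
  set (x := (INR a - INR b) / INR (S d)) in Hk.
  assert (Hx : rat_value ca cb cd [n; k] x) by now exists a, b, d.
  destruct (rat_value_div_nat K _ _ _ _ _ Hx) as (a' & b' & d' & Ha' & Hb' & Hd' & Hx').
  exists a', b', d'. repeat split; try assumption. rewrite <- Hx'.
  assert (0 < INR (S K)) by (apply lt_0_INR; lia).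
  replace (tau n / INR (S K) - x / INR (S K)) with ((tau n - x) / INR (S K)) by (field; lra).
  eapply Rle_lt_trans; [apply Rabs_div_INR_S_le | exact Hk].
Qed.

Lemma growth_function_div_nat tau K :
  growth_function tau -> growth_function (fun n => tau n / INR (S K)).
Proof.
  intros (Hc & Hnn & Hmono & Hunb). pose proof (INR_S_ge_1 K).
  pose proof (Rinv_0_lt_compat (INR (S K)) ltac:(lra)).
  split; [|split; [|split]].
  - now apply computable_real_nat_div_nat.
  - intros n. apply Rmult_le_pos; [apply Hnn | lra].
  - intros n m Hnm. apply Rmult_le_compat_r; [lra | now apply Hmono].
  - intros B. destruct (Hunb (B * INR (S K))) as (n & Hn). exists n. now apply lt_div_INR_S.
Qed.

Lemma rescale_tail_prefix T N K w n :
  (N <= n)%nat -> rescale_tail T N K (prefix w n) = T (prefix w n) / INR (S K).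
Proof.
  intros Hn. unfold rescale_tail. rewrite prefix_length.
  destruct (Nat.ltb_spec n N); [lia | reflexivity].
Qed.

Lemma R_random_of_test_class_incl k phi psi w :
  (forall T, test_class psi T -> test_class phi T) -> R_random k phi w -> R_random k psi w.
Proof.
  intros Hincl. destruct k; cbn; unfold C_random, S_random.
  - intros Hr (T & HT & Hunb). apply Hr. exists T. auto.
  - intros Hr (T & tau & HT & Htau & Hunb). apply Hr. exists T, tau. auto.
Qed.

(* [rescale_tail] changes finitely many prefixes of [w] and divides the others
   by a constant, so it preserves success on [w]. *)
Lemma R_random_of_rescale_tail k phi psi w :
  (forall T, test_class phi T -> exists N K, test_class psi (rescale_tail T N K)) ->
  R_random k psi w -> R_random k phi w.
Proof.
  intros Hresc. destruct k; cbn; unfold C_random, S_random.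
  - intros Hr (T & HT & Hunb). destruct (Hresc T HT) as (N & K & HT').
    apply Hr. exists (rescale_tail T N K). split; [exact HT'|].
    intros B N0. destruct (Hunb (B * INR (S K)) (Nat.max N0 N)) as (n & Hn & HB).
    exists n. split; [lia|]. rewrite rescale_tail_prefix by lia. now apply lt_div_INR_S.
  - intros Hr (T & tau & HT & Htau & Hunb). destruct (Hresc T HT) as (N & K & HT').
    apply Hr. exists (rescale_tail T N K), (fun n => tau n / INR (S K)).
    split; [exact HT'|]. split; [now apply growth_function_div_nat|].
    intros eps Heps N0. destruct (Hunb eps Heps (Nat.max N0 N)) as (n & Hn & He).
    exists n. split; [lia|]. rewrite rescale_tail_prefix by lia.
    assert (0 < INR (S K)) by (apply lt_0_INR; lia).
    replace (T (prefix w n) / INR (S K) - tau n / INR (S K))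
      with ((T (prefix w n) - tau n) / INR (S K)) by (field; lra).
    pose proof (div_INR_S_ge_min (T (prefix w n) - tau n) K).
    unfold Rmin in *. destruct (Rle_dec (T (prefix w n) - tau n) 0); lra.
Qed.

Theorem corollary33 :
  forall (k : rkind) (p q : Q) (a b : R) (varpi w : path),
    0 <= Q2R p -> Q2R p < Q2R q -> Q2R q <= 1 ->
    0 < a -> a <= b -> b < 1 ->
    wCH_random (const_fs a b) varpi ->
    (R_random k (phi_pq varpi (Q2R p) (Q2R q)) w <->
     R_random k (const_fs (Q2R p) (Q2R q)) w).
Proof.
  intros k p q a b varpi w Hp Hpq Hq Ha _ Hb Hw. split.
  - apply R_random_of_test_class_incl. intros T. apply test_class_phi_pq_of_const. lra.
  - apply R_random_of_rescale_tail. intros T.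
    exact (test_class_const_of_phi_pq a b varpi p q T Hw Ha Hb Hp Hq).
Qed.
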